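(* Let $G$ be a finite $p$-group, $N$ a normal subgroup, $k=\mathbb F_p$ and $n\ge 0$. Then $$\Lambda^n_N:\frac{\mathcal I(N)kG}{\mathcal I(N)\mathcal I(G)}\to\frac{\mathcal I(N)^{p^n}kG}{\mathcal J^{p^n}(N,G)},\qquad x+\mathcal I(N)\mathcal I(G)\mapsto x^{p^n}+\mathcal J^{p^n}(N,G)$$ is a well defined map.
   Context: $\mathcal I(X)$ is the augmentation ideal of $kX$, viewed inside $kG$. The ideals $\mathcal J^n(N,G)$ of $kG$ are defined by $\mathcal J^1(N,G)=\mathcal I(N)\mathcal I(G)$ and $\mathcal J^{n+1}(N,G)=\mathcal I(N)\mathcal J^n(N,G)+\mathcal J^n(N,G)\mathcal I(N)$; equivalently $\mathcal J^n(N,G)=\mathcal I(N)^n\mathcal I(G)+\sum_{i=1}^{n-1}\mathcal I(N)^{n-i}\mathcal I(G)\mathcal I(N)^i$. *)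

(* Group algebra kG modelled as finitely supported functions
   gT -> F (for G : {group gT}, kG = functions supported on G), with
   convolution product; ideals are modelled as subsets (predicates) of
   {ffun gT -> F}, and products/sums of ideals as F-linear spans. *)
From HB Require Import structures.
From mathcomp Require Import all_boot all_order all_algebra all_fingroup all_solvable.
Set Implicit Arguments. Unset Strict Implicit. Unset Printing Implicit Defensive.
Import GRing.Theory.
Local Open Scope ring_scope.

Section GroupAlgebra.
Variables (F : fieldType) (gT : finGroupType).

Definition galg := {ffun gT -> F}.

Definition gmul (a b : galg) : galg :=
  [ffun g => \sum_(h : gT) a h * b (h^-1 * g)%g].

Definition gone : galg := [ffun g => if g == 1%g then 1 else 0].

Definition gscale (c : F) (a : galg) : galg := [ffun g => c * a g].

Fixpoint gpow (x : galg) (n : nat) : galg :=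
  match n with 0 => gone | n'.+1 => gmul x (gpow x n') end.

Inductive span (S : galg -> Prop) : galg -> Prop :=
| span0 : span S 0
| span_gen x : S x -> span S x
| span_lin c x y : span S x -> span S y -> span S (gscale c x + y).

(* kX viewed inside k[gT]: functions supported on X *)
Definition kgrp (X : {set gT}) (x : galg) : Prop :=
  forall g, g \notin X -> x g = 0.

Definition aug (X : {set gT}) (x : galg) : Prop :=
  kgrp X x /\ \sum_(g : gT) x g = 0.

Definition prodI (A B : galg -> Prop) : galg -> Prop :=
  span (fun z => exists a b, A a /\ B b /\ z = gmul a b).

Definition sumI (A B : galg -> Prop) : galg -> Prop :=
  span (fun z => A z \/ B z).

(* A^n for n >= 1 (A^0 := A is never used) *)
Fixpoint powI (A : galg -> Prop) (n : nat) : galg -> Prop :=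
  match n with
  | 0 | 1 => A
  | n'.+1 => prodI A (powI A n')
  end.

(* Jaux m = J^{m+1}(N,G) *)
Fixpoint Jaux (N G : {set gT}) (m : nat) : galg -> Prop :=
  match m with
  | 0 => prodI (aug N) (aug G)
  | m'.+1 => sumI (prodI (aug N) (Jaux N G m')) (prodI (Jaux N G m') (aug N))
  end.

Definition J (N G : {set gT}) (n : nat) : galg -> Prop := Jaux N G n.-1.

End GroupAlgebra.

From Pilot Require Import Defs.
From mathcomp Require Import all_boot all_order all_algebra all_fingroup all_solvable.
Set Implicit Arguments. Unset Strict Implicit. Unset Printing Implicit Defensive.
Import GRing.Theory.
Local Open Scope ring_scope.

(* Since N is normal in G, conjugating by g in G preserves I(N), so writing
   b a = sum_g b(g) a^g g and a b = sum_g b(g) g a^(g^-1) shows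
   kG I(N) = I(N) kG. Hence I(N)^m kG is closed under products,
   J^m(N,G) is a two-sided ideal of kG, and x^m - y^m =
   x (x^(m-1) - y^(m-1)) + (x - y) y^(m-1) lies in J^m(N,G) by induction on m. *)

Section GroupAlgebra.
Variables (F : fieldType) (gT : finGroupType).
Local Notation galg := (galg F gT).
Local Notation gmul := (@gmul F gT).
Local Notation gscale := (@gscale F gT).
Local Notation gpow := (@gpow F gT).
Local Notation span := (@Defs.span F gT).

Lemma gmulDl x y z : gmul (x + y) z = gmul x z + gmul y z.
Proof.
by apply/ffunP=> g; rewrite !ffunE -big_split; apply: eq_bigr => h _; rewrite ffunE mulrDl.
Qed.

Lemma gmulDr x y z : gmul z (x + y) = gmul z x + gmul z y.
Proof.
by apply/ffunP=> g; rewrite !ffunE -big_split; apply: eq_bigr => h _; rewrite ffunE mulrDr.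
Qed.

Lemma gmulNl x z : gmul (- x) z = - gmul x z.
Proof. by apply/ffunP=> g; rewrite !ffunE -sumrN; apply: eq_bigr => h _; rewrite ffunE mulNr. Qed.

Lemma gmulNr x z : gmul z (- x) = - gmul z x.
Proof. by apply/ffunP=> g; rewrite !ffunE -sumrN; apply: eq_bigr => h _; rewrite ffunE mulrN. Qed.

Lemma gmulZl c x z : gmul (gscale c x) z = gscale c (gmul x z).
Proof.
by apply/ffunP=> g; rewrite !ffunE mulr_sumr; apply: eq_bigr => h _; rewrite ffunE mulrA.
Qed.

Lemma gmulZr c x z : gmul z (gscale c x) = gscale c (gmul z x).
Proof.
by apply/ffunP=> g; rewrite !ffunE mulr_sumr; apply: eq_bigr => h _; rewrite ffunE mulrCA.
Qed.

Lemma gmul0l z : gmul 0 z = 0.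
Proof. by apply/ffunP=> g; rewrite !ffunE big1 // => h _; rewrite ffunE mul0r. Qed.

Lemma gmul0r z : gmul z 0 = 0.
Proof. by apply/ffunP=> g; rewrite !ffunE big1 // => h _; rewrite ffunE mulr0. Qed.

Lemma gscale0 x : gscale 0 x = 0.
Proof. by apply/ffunP=> g; rewrite !ffunE mul0r. Qed.

Lemma gscale1 x : gscale 1 x = x.
Proof. by apply/ffunP=> g; rewrite !ffunE mul1r. Qed.

Lemma gmulA x y z : gmul (gmul x y) z = gmul x (gmul y z).
Proof.
apply/ffunP=> g; rewrite !ffunE.
under eq_bigr do rewrite ffunE mulr_suml.
rewrite exchange_big /=; apply: eq_bigr => j _.
rewrite ffunE mulr_sumr (reindex_inj (mulgI j)) /=.
by apply: eq_bigr => k _; rewrite mulKg mulrA invMg mulgA.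
Qed.

Lemma gmulr1 x : gmul x (gone F gT) = x.
Proof.
apply/ffunP=> g; rewrite ffunE (big_only1 g) //.
  by rewrite ffunE mulVg eqxx mulr1.
move=> k nk _; rewrite ffunE; case: eqP; rewrite ?mulr0 // => E.
by case/eqP: nk; rewrite -[k]mulg1 -E mulKVg.
Qed.

Lemma gpow1 x : gpow x 1 = x.
Proof. exact: gmulr1. Qed.

Definition lin_closed (T : galg -> Prop) :=
  T 0 /\ forall c x y, T x -> T y -> T (gscale c x + y).

Lemma span_lin_closed S : lin_closed (span S).
Proof. by split=> [|c x y]; [apply: span0 | apply: span_lin]. Qed.

Lemma lin_closedD T x y : lin_closed T -> T x -> T y -> T (x + y).
Proof. by case=> _ TL Tx Ty; rewrite -[x]gscale1; apply: TL. Qed.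

Lemma lin_closedZ T c x : lin_closed T -> T x -> T (gscale c x).
Proof. by case=> T0 TL Tx; rewrite -[gscale c x]addr0; apply: TL. Qed.

Lemma lin_closed_sum T (I : finType) (f : I -> galg) :
  lin_closed T -> (forall i, T (f i)) -> T (\sum_i f i).
Proof. by move=> lT Tf; apply: big_ind => //; [case: lT | move=> *; apply: lin_closedD]. Qed.

Lemma lin_closed_mulr T a : lin_closed T -> lin_closed (fun w => T (gmul w a)).
Proof.
case=> T0 TL; split=> [|c x y Tx Ty]; first by rewrite gmul0l.
by rewrite gmulDl gmulZl; apply: TL.
Qed.

Lemma lin_closed_mull T a : lin_closed T -> lin_closed (fun w => T (gmul a w)).
Proof.
case=> T0 TL; split=> [|c x y Tx Ty]; first by rewrite gmul0r.
by rewrite gmulDr gmulZr; apply: TL.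
Qed.

Lemma span_ind_closed S T x :
  lin_closed T -> (forall s, S s -> T s) -> span S x -> T x.
Proof. by case=> T0 TL TS; elim=> // c u v _ Tu _ Tv; apply: TL. Qed.

Lemma span_mulr S T z x : lin_closed T -> (forall s, S s -> T (gmul s z)) ->
  span S x -> T (gmul x z).
Proof. by move=> /(lin_closed_mulr z); apply: span_ind_closed. Qed.

Lemma span_mull S T z x : lin_closed T -> (forall s, S s -> T (gmul z s)) ->
  span S x -> T (gmul z x).
Proof. by move=> /(lin_closed_mull z); apply: span_ind_closed. Qed.

Lemma prodI_gen (A B : galg -> Prop) a b : A a -> B b -> prodI A B (gmul a b).
Proof. by move=> Aa Bb; apply: span_gen; exists a, b. Qed.

Definition delta (g : gT) : galg := [ffun h => if h == g then 1 else 0].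

Definition conjf (a : galg) (g : gT) : galg := [ffun h => a (h ^ g)%g].

Lemma gmul_conjf_deltal b a :
  gmul b a = \sum_g gscale (b g) (gmul (conjf a g) (delta g)).
Proof.
apply/ffunP=> h; rewrite ffunE sum_ffunE; apply: eq_bigr => g _.
rewrite !ffunE (big_only1 (h * g^-1)%g) //.
  by rewrite !ffunE invMg invgK mulgKV eqxx mulr1 conjgE mulgKV.
move=> k nk _; rewrite !ffunE; case: eqP; rewrite ?mulr0 // => E.
by case/eqP: nk; rewrite -E invMg invgK mulKVg.
Qed.

Lemma gmul_conjf_deltar a b :
  gmul a b = \sum_g gscale (b g) (gmul (delta g) (conjf a g^-1)).
Proof.
apply/ffunP=> h; rewrite ffunE sum_ffunE.
rewrite (reindex_inj (h := fun g => h * g^-1)%g); last first.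
  by move=> u v /mulgI /invg_inj.
apply: eq_bigr => g _ /=; rewrite !ffunE (big_only1 g) //.
  rewrite !ffunE eqxx mul1r invMg invgK mulrC mulgKV.
  by rewrite conjgE invgK !mulgA mulgV mul1g.
by move=> k nk _; rewrite !ffunE (negbTE nk) mul0r.
Qed.

Lemma kgrp_mul (H : {group gT}) x y : kgrp H x -> kgrp H y -> kgrp H (gmul x y).
Proof.
move=> Hx Hy g gH; rewrite ffunE big1 // => k _.
case kH: (k \in H); last by rewrite Hx ?kH ?mul0r.
rewrite Hy ?mulr0 //; apply: contra gH => kg.
by rewrite -(mulKVg k g) groupM.
Qed.

Lemma augmentation_gmul x y : \sum_g gmul x y g = (\sum_g x g) * (\sum_g y g).
Proof.
under eq_bigr do rewrite ffunE.
rewrite exchange_big mulr_suml /=; apply: eq_bigr => k _.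
rewrite mulr_sumr (reindex_inj (mulgI k)) /=.
by apply: eq_bigr => h _; rewrite mulKg.
Qed.

Lemma aug_mull (H : {group gT}) b c : kgrp H b -> aug H c -> aug H (gmul b c).
Proof. by move=> Kb [Kc Sc]; split; [apply: kgrp_mul | rewrite augmentation_gmul Sc mulr0]. Qed.

Lemma aug_mulr (H : {group gT}) b c : kgrp H b -> aug H c -> aug H (gmul c b).
Proof. by move=> Kb [Kc Sc]; split; [apply: kgrp_mul | rewrite augmentation_gmul Sc mul0r]. Qed.

Lemma delta_kgrp (H : {set gT}) g : g \in H -> kgrp H (delta g).
Proof. by move=> gH h hH; rewrite ffunE; case: eqP => // E; rewrite E gH in hH. Qed.

Lemma conjf_aug (N : {group gT}) a g : g \in 'N(N)%g -> aug N a -> aug N (conjf a g).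
Proof.
move=> gN [Ka Sa]; split=> [h hN|]; first by rewrite ffunE Ka // memJ_norm.
rewrite -[RHS]Sa (reindex_inj (conjg_inj g^-1)%g) /=.
by apply: eq_bigr => h _; rewrite ffunE conjgKV.
Qed.

Section Ideals.
Variables (G N : {group gT}).
Hypothesis nsNG : (N <| G)%g.
Local Notation A := (aug N).
Local Notation K := (kgrp G).
Local Notation P m := (prodI (powI A m) K).
Local Notation Jm := (Jaux N G).

Let conjf_augG a g : g \in G -> A a -> A (conjf a g).
Proof. by move=> gG; apply: conjf_aug; apply: subsetP (normal_norm nsNG) g gG. Qed.

Lemma mul_kgrp_aug b a : K b -> A a -> P 1 (gmul b a).
Proof.
move=> Kb Aa; rewrite gmul_conjf_deltal.
apply: lin_closed_sum (span_lin_closed _) _ => g.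
have [gG|gG] := boolP (g \in G); last by rewrite Kb // gscale0; apply: span0.
apply: lin_closedZ (span_lin_closed _) _.
by apply: prodI_gen; [apply: conjf_augG | apply: delta_kgrp].
Qed.

Lemma mul_aug_kgrp a b : A a -> K b -> prodI K A (gmul a b).
Proof.
move=> Aa Kb; rewrite gmul_conjf_deltar.
apply: lin_closed_sum (span_lin_closed _) _ => g.
have [gG|gG] := boolP (g \in G); last by rewrite Kb // gscale0; apply: span0.
apply: lin_closedZ (span_lin_closed _) _.
by apply: prodI_gen; [apply: delta_kgrp | apply: conjf_augG; rewrite ?groupV].
Qed.

Lemma mul_kgrp_powI m b u : K b -> powI A m.+1 u -> P m.+1 (gmul b u).
Proof.
elim: m b u => [|m IH] b u Kb; first exact: mul_kgrp_aug.
apply: span_mull (span_lin_closed _) _ => _ [a [u' [Aa [Hu' ->]]]].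
rewrite -gmulA; apply: span_mulr (span_lin_closed _) _ (mul_kgrp_aug Kb Aa).
move=> _ [a' [c [Aa' [Kc ->]]]]; rewrite gmulA.
apply: span_mull (span_lin_closed _) _ (IH _ _ Kc Hu').
by move=> _ [u'' [c' [Hu'' [Kc' ->]]]]; rewrite -gmulA; apply: prodI_gen => //; apply: prodI_gen.
Qed.

Lemma mul_powI_kgrp m x y : P 1 x -> P m.+1 y -> P m.+2 (gmul x y).
Proof.
move=> Px Py; apply: span_mulr (span_lin_closed _) _ Px => _ [a [b [Aa [Kb ->]]]].
apply: span_mull (span_lin_closed _) _ Py => _ [u [c [Hu [Kc ->]]]].
rewrite gmulA -(gmulA b u c).
apply: span_mulr (lin_closed_mull _ (span_lin_closed _)) _ (mul_kgrp_powI Kb Hu).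
move=> _ [u' [c' [Hu' [Kc' ->]]]].
by rewrite gmulA -gmulA; apply: prodI_gen; [apply: prodI_gen | apply: kgrp_mul].
Qed.

Lemma gpow_powI_kgrp m x : P 1 x -> P m.+1 (gpow x m.+1).
Proof.
by move=> Px; elim: m => [|m IH]; [rewrite gpow1 | apply: mul_powI_kgrp].
Qed.

Lemma mul_aug_Jaux m a w : A a -> Jm m w -> Jm m.+1 (gmul a w).
Proof. by move=> Aa Hw; apply: span_gen; left; apply: prodI_gen. Qed.

Lemma mul_Jaux_aug m a w : A a -> Jm m w -> Jm m.+1 (gmul w a).
Proof. by move=> Aa Hw; apply: span_gen; right; apply: prodI_gen. Qed.

Lemma mul_kgrp_Jaux m b w : K b -> Jm m w -> Jm m (gmul b w).
Proof.
elim: m b w => [|m IH] b w Kb.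
  apply: span_mull (span_lin_closed _) _ => _ [a [c [Aa [Ic ->]]]].
  rewrite -gmulA; apply: span_mulr (span_lin_closed _) _ (mul_kgrp_aug Kb Aa).
  by move=> _ [a' [d [Aa' [Kd ->]]]]; rewrite gmulA; apply: prodI_gen (aug_mull _ _).
apply: span_mull (span_lin_closed _) _ => s [] Hs.
  apply: span_mull (span_lin_closed _) _ Hs => _ [a [w' [Aa [Hw' ->]]]].
  rewrite -gmulA; apply: span_mulr (span_lin_closed _) _ (mul_kgrp_aug Kb Aa).
  by move=> _ [a' [d [Aa' [Kd ->]]]]; rewrite gmulA; apply: mul_aug_Jaux (IH _ _ _ _).
apply: span_mull (span_lin_closed _) _ Hs => _ [w' [a [Hw' [Aa ->]]]].
by rewrite -gmulA; apply: mul_Jaux_aug (IH _ _ _ _).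
Qed.

Lemma mul_Jaux_kgrp m b w : K b -> Jm m w -> Jm m (gmul w b).
Proof.
elim: m b w => [|m IH] b w Kb.
  apply: span_mulr (span_lin_closed _) _ => _ [a [c [Aa [Ic ->]]]].
  by rewrite gmulA; apply: prodI_gen (aug_mulr _ _).
apply: span_mulr (span_lin_closed _) _ => s [] Hs.
  apply: span_mulr (span_lin_closed _) _ Hs => _ [a [w' [Aa [Hw' ->]]]].
  by rewrite gmulA; apply: mul_aug_Jaux (IH _ _ _ _).
apply: span_mulr (span_lin_closed _) _ Hs => _ [w' [a [Hw' [Aa ->]]]].
rewrite gmulA; apply: span_mull (span_lin_closed _) _ (mul_aug_kgrp Aa Kb).
by move=> _ [d [a' [Kd [Aa' ->]]]]; rewrite -gmulA; apply: mul_Jaux_aug (IH _ _ _ _).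
Qed.

Lemma Jaux_lin_closed m : lin_closed (Jm m).
Proof. by case: m => [|m]; apply: span_lin_closed. Qed.

Lemma mul_Jaux_powI m k w u : Jm k w -> powI A m.+1 u -> Jm (k + m.+1) (gmul w u).
Proof.
elim: m k w u => [|m IH] k w u Hw; first by rewrite addn1 => Au; apply: mul_Jaux_aug.
move=> Hu; apply: span_mull (Jaux_lin_closed _) _ Hu => _ [a [u' [Aa [Hu' ->]]]].
by rewrite -gmulA -addSnnS; apply: IH => //; apply: mul_Jaux_aug.
Qed.

Lemma mul_Jaux0_powI_kgrp m z y : Jm 0 z -> P m.+1 y -> Jm m.+1 (gmul z y).
Proof.
move=> Hz; apply: span_mull (span_lin_closed _) _ => _ [u [c [Hu [Kc ->]]]].
by rewrite -gmulA; apply: mul_Jaux_kgrp (mul_Jaux_powI (k := 0) _ _).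
Qed.

Lemma mul_aug_kgrp_Jaux k x w : P 1 x -> Jm k w -> Jm k.+1 (gmul x w).
Proof.
move=> Px Hw; apply: span_mulr (span_lin_closed _) _ Px => _ [a [b [Aa [Kb ->]]]].
by rewrite gmulA; apply: mul_aug_Jaux (mul_kgrp_Jaux _ _).
Qed.

Lemma gpowB_Jaux m x y : P 1 x -> P 1 y -> Jm 0 (x - y) ->
  Jm m (gpow x m.+1 - gpow y m.+1).
Proof.
move=> Px Py Hxy; elim: m => [|m IH]; first by rewrite !gpow1.
have -> : gpow x m.+2 - gpow y m.+2 =
    gmul x (gpow x m.+1 - gpow y m.+1) + gmul (x - y) (gpow y m.+1).
  by rewrite /= gmulDr gmulNr gmulDl gmulNl addrA subrK.
apply: lin_closedD (span_lin_closed _) _ _; first exact: mul_aug_kgrp_Jaux.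
exact: mul_Jaux0_powI_kgrp (gpow_powI_kgrp _ _).
Qed.

End Ideals.
End GroupAlgebra.

Unset Implicit Arguments.

Theorem mainTheorem7 (p : nat) (gT : finGroupType) (G N : {group gT}) (n : nat) :
  prime p -> (p.-group G)%g -> (N <| G)%g ->
  (forall x : galg 'F_p gT,
      prodI (aug N) (kgrp G) x ->
      prodI (powI (aug N) (p ^ n)) (kgrp G) (gpow x (p ^ n))) /\
  (forall x y : galg 'F_p gT,
      prodI (aug N) (kgrp G) x -> prodI (aug N) (kgrp G) y ->
      prodI (aug N) (aug G) (x - y) ->
      J N G (p ^ n) (gpow x (p ^ n) - gpow y (p ^ n))).
Proof.
move=> p_pr _ nsNG.
have pn_gt0 : (0 < p ^ n)%N by rewrite expn_gt0 prime_gt0.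
rewrite /J -(prednK pn_gt0); split=> [x Px|x y Px Py Pxy].
  exact: gpow_powI_kgrp.
exact: gpowB_Jaux.
Qed.
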